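(* Suppose the cost functions $(c_t)_t$ of $\mathcal{L}$ are convex and $L$-Lipschitz (as below). Let $\tau,\beta>0$ and suppose $\mathcal{K}^{\mathrm{sim}}_\tau(\mathcal{L})$ is nonempty. Consider the execution of GPC-Simplex on $\mathcal{L}$ with input $(A,B,\tau,H,\mathcal{I},T)$. If its iterates $(p_t,M_t^{[1:H]})_{t\in[T]}$ satisfy $\|p_t-p_{t+1}\|_1\le\beta$ and $\max_{i\in[H]}\|M_t^{[i]}-M_{t+1}^{[i]}\|_{1\to1}\le\beta$, then for each $t\in[T]$ the loss function $\ell_t$ computed at step $t$ satisfies $$|\ell_t(p_t,M_t^{[1:H]})-c_t(x_t,u_t)|\le O\big(L\tau^3\beta\log^3(1/\beta)\big),$$ where $(x_t,u_t)$ are the actual state and control of the algorithm at time $t$.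
   Context: Notation. $\Delta^d$ is the probability simplex; $\Delta^d_\alpha:=\alpha\Delta^d$. $\mathbb{S}^d$: $d\times d$ column-stochastic matrices; $\mathbb{S}^d_a:=\{aM:M\in\mathbb{S}^d\}$; $\mathbb{S}^d_{[a,b]}:=\bigcup_{a'\in[a,b]}\mathbb{S}^d_{a'}$. $\|M\|_{1\to1}:=\sup_{\|x\|_1=1}\|Mx\|_1$; $M_{\cdot,j}$ is the $j$-th column. $O(\cdot)$ hides a universal constant. Setting. $\mathcal{L}=(A,B,\mathcal{I},x_1,(\gamma_t),(w_t),(c_t))$ is a simplex LDS on $\Delta^d$: $A,B\in\mathbb{S}^d$, $\mathcal{I}=\bigcup_{\alpha\in[\alpha_{\mathrm{lb}},\alpha_{\mathrm{ub}}]}\Delta^d_\alpha$ with $0\le\alpha_{\mathrm{lb}}\le\alpha_{\mathrm{ub}}\le1$, $x_1\in\Delta^d$, $\gamma_t\in[0,1]$, $w_t\in\Delta^d$; given $x_t$, $u_t\in\mathcal{I}$: $x_{t+1}=(1-\gamma_t)[(1-\|u_t\|_1)Ax_t+Bu_t]+\gamma_tw_t$, cost $c_t(x_t,u_t)$. Costs: $c_t$ convex, $|c_t(x,u)-c_t(x',u')|\le L(\|x-x'\|_1+\|u-u'\|_1)$. Protocol: $A,B$ known; at step $t$ the controller observes $x_t$, plays $u_t$, observes $c_t$, then observes $x_{t+1}$ and $\gamma_t$. Mixing: for $X\in\mathbb{S}^d$ with unique stationary distribution $\pi$, $D_X(t):=\sup_{p\in\Delta^d}\|X^tp-\pi\|_1$,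 $t_{\mathrm{mix}}(X):=\min\{t:D_X(t)\le1/4\}$ ($\infty$ otherwise). $C(K):=(1-\|K\|_{1\to1})A+BK$. $\mathcal{K}^{\mathrm{sim}}_\tau(\mathcal{L})$: policies $x\mapsto Kx$ with $K\in\mathbb{S}^d_{[\alpha_{\mathrm{lb}},\alpha_{\mathrm{ub}}]}$, $t_{\mathrm{mix}}(C(K))\le\tau$. Algorithm GPC-Simplex, input $(A,B,\tau,H,\mathcal{I},T)$: $\tau_A:=t_{\mathrm{mix}}(A)$, $a_0:=\max\{\alpha_{\mathrm{lb}},\min\{\alpha_{\mathrm{ub}},\mathbf{1}\{\tau_A>4\tau\}/(96\tau)\}\}$, $\mathcal{X}:=\bigcup_{a\in[a_0,\alpha_{\mathrm{ub}}]}\Delta^d_a\times(\mathbb{S}^d_a)^H$. For $v\in\Delta^d_{\le1}$, $v^c:=1-\sum_jv_j$, $\mathrm{Ent}(v):=v^c\ln\frac1{v^c}+\sum_jv_j\ln\frac1{v_j}$, $R(p,M^{[1:H]}):=-\mathrm{Ent}(p)-\sum_{h,j}\mathrm{Ent}(M^{[h]}_{\cdot,j})$. Conventions $w_0:=x_1$, $\gamma_0:=1$, $w_t:=0$ for $t<0$; $\lambda_{t,i}:=\gamma_{t-i}\prod_{j=1}^{i-1}(1-\gamma_{t-j})$ ($i\ge1$), $\lambda_{t,0}:=1-\sum_{i=1}^H\lambda_{t,i}$. Step size $\eta:=c\sqrt{dH\ln d}/(L\tau^2\log^2(T)\sqrt T)$ for a sufficiently small constant $c$. Initialize $(p_1,M_1^{[1:H]}):=\arg\min_{\mathcal{X}}R$.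 For $t=1,\dots,T$: play $u_t:=\lambda_{t,0}p_t+\sum_{i=1}^H\lambda_{t,i}M_t^{[i]}w_{t-i}$; receive $c_t$; observe $x_{t+1},\gamma_t$, set $w_t:=\gamma_t^{-1}(x_{t+1}-(1-\gamma_t)[(1-\|u_t\|_1)Ax_t+Bu_t])$ ($w_t:=0$ if $\gamma_t=0$); define $\ell_t(p,M^{[1:H]}):=c_t(x_t(p,M^{[1:H]}),u_t(p,M^{[1:H]}))$ where $x_1(p,M^{[1:H]}):=x_1$ and for $s\ge1$: $u_s(p,M^{[1:H]}):=\lambda_{s,0}p+\sum_{j=1}^H\lambda_{s,j}M^{[j]}w_{s-j}$, $x_{s+1}(p,M^{[1:H]}):=(1-\gamma_s)[(1-\|u_s(p,M^{[1:H]})\|_1)Ax_s(p,M^{[1:H]})+Bu_s(p,M^{[1:H]})]+\gamma_sw_s$; update $(p_{t+1},M_{t+1}^{[1:H]}):=\arg\min_{z\in\mathcal{X}}\sum_{s=1}^t\langle z,\nabla\ell_s(p_s,M_s^{[1:H]})\rangle+\frac1\eta R(z)$. *)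

From HB Require Import structures.
From mathcomp Require Import all_boot all_order all_algebra.
From mathcomp Require Import all_classical all_reals all_analysis.
Set Implicit Arguments. Unset Strict Implicit. Unset Printing Implicit Defensive.
Import Order.TTheory GRing.Theory Num.Theory.
Local Open Scope classical_set_scope.
Local Open Scope ring_scope.

Section SimplexLDS.
Context {R : realType} {d : nat}.
Local Notation vec := 'cV[R]_d.
Local Notation mat := 'M[R]_d.

Definition norm1 (v : vec) : R := \sum_i `|v i 0|.

Definition in_simplex (v : vec) : Prop :=
  (forall i, 0 <= v i 0) /\ \sum_i v i 0 = 1.
Definition simplex_a (a : R) (v : vec) : Prop :=
  exists v0, in_simplex v0 /\ v = a *: v0.

Definition col_stoch (M : mat) : Prop :=
  (forall i j, 0 <= M i j) /\ (forall j, \sum_i M i j = 1).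
Definition stoch_a (a : R) (M : mat) : Prop :=
  exists M0, col_stoch M0 /\ M = a *: M0.
Definition stoch_in (a b : R) (M : mat) : Prop :=
  exists a', a <= a' <= b /\ stoch_a a' M.

Definition opnorm11 (M : mat) : R :=
  sup ((fun x : vec => norm1 (M *m x)) @` [set x : vec | norm1 x = 1]).

Definition uniq_stat (X : mat) (pi : vec) : Prop :=
  in_simplex pi /\ X *m pi = pi /\
  (forall pi', in_simplex pi' -> X *m pi' = pi' -> pi' = pi).

Definition mixD (X : mat) (pi : vec) (t : nat) : R :=
  sup ((fun p : vec => norm1 (iter t (mulmx X) p - pi)) @` [set p | in_simplex p]).

(* t_mix(X) := min { t | D_X(t) <= 1/4 } (with the unique stationary pi),
   +oo if there is no such t or no unique stationary distribution. *)
Definition tmix (X : mat) : \bar R :=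
  ereal_inf [set (t%:R)%:E | t in
    [set t : nat | exists pi, uniq_stat X pi /\ mixD X pi t <= 4^-1]].

Definition CK (A B K : mat) : mat := (1 - opnorm11 K) *: A + B *m K.

Definition Ksim_nonempty (A B : mat) (alb aub tau : R) : Prop :=
  exists K : mat, stoch_in alb aub K /\ (tmix (CK A B K) <= tau%:E)%E.

Definition simplex_lds (A B : mat) (alb aub : R) (x1 : vec)
    (gam : nat -> R) (w : nat -> vec) : Prop :=
  col_stoch A /\ col_stoch B /\ 0 <= alb /\ alb <= aub /\ aub <= 1 /\
  in_simplex x1 /\
  (forall t, (1 <= t)%N -> 0 <= gam t <= 1) /\
  (forall t, (1 <= t)%N -> in_simplex (w t)).

Definition costs_convex (c : nat -> vec -> vec -> R) : Prop :=
  forall t (x x' u u' : vec) (l : R), 0 <= l <= 1 ->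
    c t (l *: x + (1 - l) *: x') (l *: u + (1 - l) *: u')
      <= l * c t x u + (1 - l) * c t x' u'.
Definition costs_lipschitz (L : R) (c : nat -> vec -> vec -> R) : Prop :=
  forall t (x x' u u' : vec),
    `|c t x u - c t x' u'| <= L * (norm1 (x - x') + norm1 (u - u')).

Definition gam0 (gam : nat -> R) (n : nat) : R := if n == 0%N then 1 else gam n.
Definition west0 (x1 : vec) (west : nat -> vec) (n : nat) : vec :=
  if n == 0%N then x1 else west n.

(* lambda_{t,i} := gamma_{t-i} prod_{j=1}^{i-1} (1 - gamma_{t-j}), i >= 1.
   With natural-number subtraction, for i > t the product contains the factor
   (1 - gamma_0) = 0, so lambda_{t,i} = 0, as with the paper's conventions. *)
Definition lam (gam : nat -> R) (t i : nat) : R :=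
  gam0 gam (t - i) * \prod_(1 <= j < i) (1 - gam0 gam (t - j)).
Definition lam0 (H : nat) (gam : nat -> R) (t : nat) : R :=
  1 - \sum_(1 <= i < H.+1) lam gam t i.

(* u_t(p, M^{[1:H]}) ; M h stands for M^{[h]}, h = 1..H *)
Definition uctrl (H : nat) (gam : nat -> R) (x1 : vec) (west : nat -> vec)
    (t : nat) (p : vec) (M : nat -> mat) : vec :=
  lam0 H gam t *: p
  + \sum_(1 <= i < H.+1) lam gam t i *: (M i *m west0 x1 west (t - i)).

Definition step (A B : mat) (g : R) (x u w : vec) : vec :=
  (1 - g) *: ((1 - norm1 u) *: (A *m x) + B *m u) + g *: w.

Fixpoint cfx (A B : mat) (H : nat) (gam : nat -> R) (x1 : vec)
    (west : nat -> vec) (p : vec) (M : nat -> mat) (n : nat) : vec :=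
  match n with
  | 0 => x1
  | m.+1 => if m is 0 then x1 else
      step A B (gam m) (cfx A B H gam x1 west p M m)
           (uctrl H gam x1 west m p M) (west m)
  end.

Definition ell (A B : mat) (H : nat) (gam : nat -> R) (x1 : vec)
    (west : nat -> vec) (c : nat -> vec -> vec -> R) (t : nat)
    (p : vec) (M : nat -> mat) : R :=
  c t (cfx A B H gam x1 west p M t) (uctrl H gam x1 west t p M).

Definition a0 (A : mat) (alb aub tau : R) : R :=
  Num.max alb (Num.min aub
    ((if ((4 * tau)%:E < tmix A)%E then 1 else 0) / (96 * tau))).

Definition inX (amin aub : R) (H : nat) (p : vec) (M : nat -> mat) : Prop :=
  exists a, amin <= a <= aub /\ simplex_a a p /\
            (forall h, (1 <= h <= H)%N -> stoch_a a (M h)).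

(* entropy: x ln(1/x) with 0 ln(1/0) = 0 *)
Definition xlninv (x : R) : R := x * ln x^-1.
Definition Ent (v : vec) : R :=
  xlninv (1 - \sum_j v j 0) + \sum_j xlninv (v j 0).
Definition Reg (H : nat) (p : vec) (M : nat -> mat) : R :=
  - Ent p - \sum_(1 <= h < H.+1) \sum_j Ent (col j (M h)).

Definition inner (H : nat) (p : vec) (M : nat -> mat)
    (gp : vec) (gM : nat -> mat) : R :=
  \sum_i p i 0 * gp i 0 + \sum_(1 <= h < H.+1) \sum_i \sum_j M h i j * gM h i j.

(* step size; c is the (small) universal constant *)
Definition stepsize (c L tau : R) (d' H T : nat) : R :=
  c * Num.sqrt (d'%:R * H%:R * ln d'%:R)
    / (L * tau ^+ 2 * (ln T%:R) ^+ 2 * Num.sqrt T%:R).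

Definition ftrl_obj (H : nat) (etav : R) (gp : nat -> vec) (gM : nat -> nat -> mat)
    (t : nat) (p : vec) (M : nat -> mat) : R :=
  \sum_(1 <= s < t.+1) inner H p M (gp s) (gM s) + etav^-1 * Reg H p M.

End SimplexLDS.

From HB Require Import structures.
From mathcomp Require Import all_boot all_order all_algebra.
From mathcomp Require Import all_classical all_reals all_analysis.
From mathcomp Require Import lra ring.
Set Implicit Arguments. Unset Strict Implicit. Unset Printing Implicit Defensive.
Import Order.TTheory GRing.Theory Num.Theory.
Local Open Scope ring_scope.

(* Fix t and compare the actual states x_s with the counterfactual states xt_s obtained by
   playing the frozen parameters (p_t, M_t) from the start.  The disturbance estimates agree
   with the true disturbances whenever they carry weight, so both trajectories stay in the
   simplex and e_s = xt_s - x_s has zero mass.  Writing a = |p_t|_1, one step of the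
   dynamics gives e_{s+1} = (1 - gamma_s) ((1 - a) A e_s + f_s), where the forcing f_s
   comes from the controls of p_s, M_s versus p_t, M_t and is at most 2 beta (t - s) by
   stability of the iterates.
   The matrix (1 - a) A contracts zero-mass vectors: by 1 - a in one step if a >= 1/(96 tau);
   otherwise a_0 < 1/(96 tau), so either A mixes within 4 tau steps, or every admissible
   mass is below 1/(96 tau) and A is a 2/(96 tau)-perturbation of a closed loop C(K) mixing
   within tau steps; in both cases zero-mass vectors are halved within 8 tau steps.
   Summing the forcing over contraction blocks of length n and rate rho bounds |e_t|_1 by
   2 beta (n / (1 - rho))^2 <= 2 beta (96 tau)^3, and the losses differ by at most L |e_t|_1. *)

Section L1Geometry.
Context {R : realType} {d : nat}.
Local Notation vec := 'cV[R]_d.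
Local Notation mat := 'M[R]_d.

Definition mass (v : vec) : R := \sum_i v i 0.

(* [in_simplex v] is convertible to [nonneg_mass v 1]. *)
Definition nonneg_mass (v : vec) (a : R) : Prop :=
  (forall i, 0 <= v i 0) /\ mass v = a.

Definition nonexpansive (X : mat) : Prop := forall v : vec, norm1 (X *m v) <= norm1 v.

Lemma norm1_ge0 (v : vec) : 0 <= norm1 v.
Proof. exact: sumr_ge0. Qed.

Lemma norm10 : norm1 (0 : vec) = 0.
Proof. by rewrite /norm1 big1 // => i _; rewrite mxE normr0. Qed.

Lemma norm1D (u v : vec) : norm1 (u + v) <= norm1 u + norm1 v.
Proof. by rewrite /norm1 -big_split; apply: ler_sum => i _; rewrite mxE ler_normD. Qed.

Lemma norm1Z (k : R) (v : vec) : norm1 (k *: v) = `|k| * norm1 v.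
Proof. by rewrite /norm1 mulr_sumr; apply: eq_bigr => i _; rewrite mxE normrM. Qed.

Lemma norm1N (v : vec) : norm1 (- v) = norm1 v.
Proof. by rewrite -scaleN1r norm1Z normrN1 mul1r. Qed.

Lemma norm1_distC (u v : vec) : norm1 (u - v) = norm1 (v - u).
Proof. by rewrite -norm1N opprB. Qed.

Lemma norm1_distD (u v z : vec) : norm1 (u - z) <= norm1 (u - v) + norm1 (v - z).
Proof. by have := norm1D (u - v) (v - z); rewrite addrA subrK. Qed.

Lemma norm1_dist_dist (u v : vec) : `|norm1 u - norm1 v| <= norm1 (u - v).
Proof.
have := norm1_distD u v 0; have := norm1_distD v u 0.
by rewrite !subr0 norm1_distC ler_norml => ? ?; apply/andP; split; lra.
Qed.

Lemma norm1_sum (I : Type) (r : seq I) (P : pred I) (F : I -> vec) :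
  norm1 (\sum_(i <- r | P i) F i) <= \sum_(i <- r | P i) norm1 (F i).
Proof.
elim/big_rec2: _ => [|i y1 y2 _ h]; first by rewrite norm10.
exact: le_trans (norm1D _ _) (lerD (lexx _) h).
Qed.

Lemma norm1_eq0 (v : vec) : norm1 v = 0 -> v = 0.
Proof.
move=> /(psumr_eq0P (fun i _ => normr_ge0 (v i 0))) v0.
by apply/matrixP => i j; rewrite ord1 mxE; apply/normr0_eq0/v0.
Qed.

Lemma massD (u v : vec) : mass (u + v) = mass u + mass v.
Proof. by rewrite /mass -big_split; apply: eq_bigr => i _; rewrite mxE. Qed.

Lemma massZ (k : R) (v : vec) : mass (k *: v) = k * mass v.
Proof. by rewrite /mass mulr_sumr; apply: eq_bigr => i _; rewrite mxE. Qed.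

Lemma massB (u v : vec) : mass (u - v) = mass u - mass v.
Proof. by rewrite -scaleN1r massD massZ mulN1r. Qed.

Lemma in_simplex_mass (v : vec) : in_simplex v -> mass v = 1.
Proof. by case. Qed.

Lemma nonneg_mass_norm1 (v : vec) a : nonneg_mass v a -> norm1 v = a.
Proof. by case=> v0 <-; apply: eq_bigr => i _; rewrite ger0_norm. Qed.

Lemma nonneg_massZ (v : vec) a k : 0 <= k -> nonneg_mass v a -> nonneg_mass (k *: v) (k * a).
Proof. by move=> k0 [v0 <-]; split=> [i|]; rewrite ?massZ // mxE mulr_ge0. Qed.

Lemma nonneg_massD (u v : vec) a b :
  nonneg_mass u a -> nonneg_mass v b -> nonneg_mass (u + v) (a + b).
Proof. by move=> [u0 <-] [v0 <-]; split=> [i|]; rewrite ?massD // mxE addr_ge0. Qed.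

Lemma nonneg_mass_sum (I : Type) (r : seq I) (P : pred I) (F : I -> vec) (a : I -> R) :
  (forall i, P i -> nonneg_mass (F i) (a i)) ->
  nonneg_mass (\sum_(i <- r | P i) F i) (\sum_(i <- r | P i) a i).
Proof.
move=> Fa; elim/big_rec2: _ => [|i v b Pi vb]; last exact: nonneg_massD (Fa i Pi) vb.
by split=> [i|]; rewrite /mass ?big1 // => *; rewrite mxE.
Qed.

Lemma norm1_drift (q : nat -> vec) s k b :
  (forall r, (s <= r < s + k)%N -> norm1 (q r - q r.+1) <= b) ->
  norm1 (q (s + k)%N - q s) <= k%:R * b.
Proof.
elim: k => [|k ih] qb; first by rewrite addn0 subrr norm10 mul0r.
rewrite addnS mulrSr mulrDl mul1r [leRHS]addrC.
apply: le_trans (norm1_distD _ (q (s + k)%N) _) _; apply: lerD.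
  by rewrite norm1_distC qb // leq_addr /= addnS.
by apply: ih => r /andP [sr rk]; rewrite qb // sr /= (ltn_trans rk) // addnS.
Qed.

Lemma zero_mass_decomp (v : vec) : mass v = 0 -> v != 0 ->
  exists m (q1 q2 : vec), [/\ in_simplex q1, in_simplex q2,
    v = m *: (q1 - q2) & norm1 v = 2 * m].
Proof.
move=> v0 v_neq0; pose vp : vec := \col_i Num.max (v i 0) 0.
pose vm : vec := \col_i Num.max (- v i 0) 0.
have vp0 i : 0 <= vp i 0 by rewrite mxE le_max lexx orbT.
have vm0 i : 0 <= vm i 0 by rewrite mxE le_max lexx orbT.
have parts (y : R) : y = Num.max y 0 - Num.max (- y) 0 /\
                     `|y| = Num.max y 0 + Num.max (- y) 0.
  have [y0|y0] := lerP 0 y.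
    by rewrite (max_idPr _ : Num.max (- y) 0 = 0) ?oppr_le0 // subr0 addr0 ger0_norm.
  by rewrite (max_idPl _ : Num.max (- y) 0 = - y) ?oppr_ge0 ?ltW // sub0r opprK add0r ltr0_norm.
have vpm : v = vp - vm by apply/matrixP => i j; rewrite ord1 !mxE; exact: (parts _).1.
set m := mass vp.
have mvm : mass vm = m by apply/eqP; rewrite eq_sym -subr_eq0 -massB -vpm v0.
have nv : norm1 v = 2 * m.
  rewrite /norm1 (eq_bigr (fun i => vp i 0 + vm i 0)) ?big_split /= -/(mass vp) -/(mass vm).
    by rewrite mvm mulr2n mulrDl mul1r.
  by move=> i _; rewrite !mxE; exact: (parts _).2.
have m_gt0 : 0 < m.
  rewrite lt_def sumr_ge0 // andbT; apply: contra_neq v_neq0 => m0.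
  by apply: norm1_eq0; rewrite nv m0 mulr0.
have simplex_part (z : vec) : nonneg_mass z m -> in_simplex (m^-1 *: z).
  move=> zm; have mi : 0 <= m^-1 by rewrite invr_ge0 ltW.
  by have := nonneg_massZ mi zm; rewrite mulVf ?gt_eqF.
exists m, (m^-1 *: vp), (m^-1 *: vm); split => //.
- exact: simplex_part (conj vp0 erefl).
- exact: simplex_part (conj vm0 mvm).
- by rewrite -scalerBr scalerA mulfV ?gt_eqF // scale1r.
Qed.

Lemma col_stoch_nonexpansive (A : mat) : col_stoch A -> nonexpansive A.
Proof.
case=> A0 A1 v; rewrite /norm1.
apply: (@le_trans _ _ (\sum_i \sum_j A i j * `|v j 0|)).
  apply: ler_sum => i _; rewrite mxE; apply: le_trans (ler_norm_sum _ _ _) _.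
  by apply: ler_sum => j _; rewrite normrM ger0_norm.
by rewrite exchange_big; apply: ler_sum => j _; rewrite -mulr_suml A1 mul1r.
Qed.

Lemma col_stoch_mass (A : mat) (v : vec) : col_stoch A -> mass (A *m v) = mass v.
Proof.
case=> _ A1; rewrite /mass; under eq_bigr do rewrite mxE.
rewrite exchange_big /=.
by apply: eq_bigr => j _; rewrite -mulr_suml A1 mul1r.
Qed.

Lemma col_stoch_nonneg_mass (A : mat) (v : vec) a :
  col_stoch A -> nonneg_mass v a -> nonneg_mass (A *m v) a.
Proof.
move=> A_stoch [v0 va]; split; last by rewrite col_stoch_mass.
by move=> i; rewrite mxE; apply: sumr_ge0 => j _; rewrite mulr_ge0 //; case: A_stoch.
Qed.

Lemma opnorm11_ub (N : mat) (v : vec) : norm1 v = 1 -> norm1 (N *m v) <= opnorm11 N.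
Proof.
move=> v1; apply: sup_upper_bound; last by exists v.
split; first by exists (norm1 (N *m v)), v.
exists (\sum_i \sum_j `|N i j|) => _ [z z1 <-].
apply: ler_sum => i _; rewrite mxE; apply: le_trans (ler_norm_sum _ _ _) _.
apply: ler_sum => j _; rewrite normrM ler_piMr // -z1 /norm1.
by rewrite (bigD1 j) //= lerDl sumr_ge0.
Qed.

Lemma opnorm11_scaled_stoch (K0 : mat) a (q : vec) :
  col_stoch K0 -> 0 <= a -> in_simplex q -> opnorm11 (a *: K0) = a.
Proof.
move=> K0_stoch a_ge0 q_simplex; have q1 := nonneg_mass_norm1 q_simplex.
apply/eqP; rewrite eq_le; apply/andP; split.
  apply: ge_sup; first by exists (norm1 ((a *: K0) *m q)), q.
  move=> _ [z z1 <-]; rewrite -scalemxAl norm1Z ger0_norm // ler_piMr //.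
  by rewrite -z1; apply: col_stoch_nonexpansive.
have := opnorm11_ub (a *: K0) q1; rewrite -scalemxAl norm1Z ger0_norm //.
by rewrite (nonneg_mass_norm1 (col_stoch_nonneg_mass K0_stoch q_simplex)) mulr1.
Qed.

End L1Geometry.

Section Mixing.
Context {R : realType} {d : nat}.
Local Notation vec := 'cV[R]_d.
Local Notation mat := 'M[R]_d.

Lemma iter_mulmx (X : mat) k (v : vec) : iter k (mulmx X) v = X ^+ k *m v.
Proof. by elim: k => [|k ih] /=; rewrite ?expr0 ?mul1mx // ih exprS mulmxA. Qed.

Lemma exprZmx (c : R) (X : mat) k : (c *: X) ^+ k = c ^+ k *: X ^+ k.
Proof.
elim: k => [|k ih]; first by rewrite !expr0 scale1r.
by rewrite !exprS ih -!mulmxE -scalemxAl -scalemxAr scalerA.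
Qed.

Lemma nonexpansive_exp (X : mat) k : nonexpansive X -> nonexpansive (X ^+ k).
Proof.
move=> X_ne v; elim: k => [|k ih]; first by rewrite expr0 mul1mx.
by rewrite exprS -mulmxA; apply: le_trans (X_ne _) ih.
Qed.

Lemma mixD_ub (X : mat) (pi q : vec) k : nonexpansive X ->
  in_simplex pi -> in_simplex q -> norm1 (X ^+ k *m q - pi) <= mixD X pi k.
Proof.
move=> X_ne pi_simplex q_simplex; rewrite -iter_mulmx.
apply: sup_upper_bound; last by exists q.
split; first by exists (norm1 (iter k (mulmx X) q - pi)), q.
exists 2 => _ [z z_simplex <-]; rewrite -opprB norm1N iter_mulmx.
apply: le_trans (norm1D _ _) _; rewrite norm1N (nonneg_mass_norm1 pi_simplex).
by rewrite lerD2l -(nonneg_mass_norm1 z_simplex) nonexpansive_exp.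
Qed.

Lemma mixD_zero_mass_contraction (X : mat) (pi v : vec) k :
  nonexpansive X -> in_simplex pi -> mixD X pi k <= 4^-1 -> mass v = 0 ->
  norm1 (X ^+ k *m v) <= norm1 v / 4.
Proof.
move=> X_ne pi_simplex mixed v0; have [->|v_neq0] := eqVneq v 0.
  by rewrite mulmx0 norm10 mul0r.
have [m [q1 [q2 [q1_simplex q2_simplex v_eq nv]]]] := zero_mass_decomp v0 v_neq0.
have m0 : 0 <= m by rewrite -(@pmulr_rge0 _ 2) // -nv norm1_ge0.
rewrite nv v_eq -scalemxAr norm1Z ger0_norm // mulmxBr.
have := norm1_distD (X ^+ k *m q1) pi (X ^+ k *m q2).
rewrite (norm1_distC pi); have := mixD_ub k X_ne pi_simplex q1_simplex.
have := mixD_ub k X_ne pi_simplex q2_simplex; nra.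
Qed.

Lemma tmix_le_witness (X : mat) r : 0 <= r -> (tmix X <= r%:E)%E ->
  exists k : nat, k%:R <= 2 * r /\ exists pi, uniq_stat X pi /\ mixD X pi k <= 4^-1.
Proof.
move=> r0 Xr; have : (tmix X < (r + 2^-1)%:E)%E.
  by apply: le_lt_trans Xr _; rewrite lte_fin ltrDl.
move=> /ereal_inf_lt [_ [k mixed <-]]; rewrite lte_fin => kr.
exists k; split => //; case: k kr {mixed} => [|k kr]; first by rewrite mulr_ge0.
have : 1 <= k.+1%:R :> R by rewrite ler1n.
lra.
Qed.

Lemma exp_perturbation (X Y : mat) dl k (v : vec) :
  nonexpansive X -> nonexpansive Y -> 0 <= dl ->
  (forall z : vec, norm1 (X *m z - Y *m z) <= dl * norm1 z) ->
  norm1 (X ^+ k *m v - Y ^+ k *m v) <= k%:R * dl * norm1 v.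
Proof.
move=> X_ne Y_ne dl0 XY; elim: k => [|k ih]; first by rewrite subrr norm10 !mul0r.
rewrite !exprS -!mulmxA; set a := X ^+ k *m v; set b := Y ^+ k *m v.
have -> : X *m a - Y *m b = X *m (a - b) + (X *m b - Y *m b).
  by rewrite mulmxBr addrA subrK.
apply: le_trans (norm1D _ _) _; rewrite mulrSr 2!mulrDl mul1r.
apply: lerD; first exact: le_trans (X_ne _) ih.
by apply: le_trans (XY b) _; rewrite ler_wpM2l // nonexpansive_exp.
Qed.

Lemma near_mixing_contraction (X Y : mat) r dl :
  nonexpansive X -> nonexpansive Y -> 0 <= r -> (tmix X <= r%:E)%E -> 0 <= dl ->
  (forall z : vec, norm1 (X *m z - Y *m z) <= dl * norm1 z) -> 2 * r * dl <= 4^-1 ->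
  exists k : nat, k%:R <= 2 * r /\
    forall v : vec, mass v = 0 -> norm1 (Y ^+ k *m v) <= norm1 v / 2.
Proof.
move=> X_ne Y_ne r0 Xr dl0 XY rdl.
have [k [kr [pi [[pi_simplex _] mixed]]]] := tmix_le_witness r0 Xr.
exists k; split => // v v0.
have Xk := mixD_zero_mass_contraction X_ne pi_simplex mixed v0.
have XYk := exp_perturbation k v X_ne Y_ne dl0 XY.
have := norm1_distD (Y ^+ k *m v) (X ^+ k *m v) 0; rewrite !subr0 norm1_distC.
have : k%:R * dl * norm1 v <= 4^-1 * norm1 v.
  by rewrite ler_wpM2r ?norm1_ge0 //; apply: le_trans rdl; rewrite ler_wpM2r.
have := norm1_ge0 v; lra.
Qed.

End Mixing.

Section ClosedLoop.
Context {R : realType} {d : nat}.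
Local Notation vec := 'cV[R]_d.
Local Notation mat := 'M[R]_d.
Variables (A B K0 : mat) (a : R) (q : vec).
Hypotheses (A_stoch : col_stoch A) (B_stoch : col_stoch B) (K0_stoch : col_stoch K0).
Hypotheses (a_ge0 : 0 <= a) (a_le1 : a <= 1) (q_simplex : in_simplex q).

Lemma CK_scaled_stochE (z : vec) :
  CK A B (a *: K0) *m z = (1 - a) *: (A *m z) + a *: (B *m (K0 *m z)).
Proof.
rewrite /CK (opnorm11_scaled_stoch K0_stoch a_ge0 q_simplex) mulmxDl.
by rewrite -scalemxAr -!scalemxAl mulmxA.
Qed.

Lemma CK_nonexpansive : nonexpansive (CK A B (a *: K0)).
Proof.
move=> z; rewrite CK_scaled_stochE; apply: le_trans (norm1D _ _) _.
rewrite !norm1Z ger0_norm ?subr_ge0 // ger0_norm //.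
apply: (@le_trans _ _ ((1 - a) * norm1 z + a * norm1 z)); last by rewrite -mulrDl subrK mul1r.
apply: lerD; rewrite ler_wpM2l ?subr_ge0 //; first exact: col_stoch_nonexpansive.
exact: le_trans (col_stoch_nonexpansive B_stoch _) (col_stoch_nonexpansive K0_stoch _).
Qed.

Lemma CK_dist_A (z : vec) : norm1 (CK A B (a *: K0) *m z - A *m z) <= 2 * a * norm1 z.
Proof.
have -> : CK A B (a *: K0) *m z - A *m z = a *: (B *m (K0 *m z) - A *m z).
  rewrite CK_scaled_stochE; move: (A *m z) (B *m _) => Az BKz.
  by apply/matrixP => i j; rewrite !mxE; ring.
rewrite norm1Z ger0_norm // [2 * a]mulrC -mulrA ler_wpM2l // mulr2n mulrDl mul1r.
apply: le_trans (norm1D _ _) _; rewrite norm1N.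
apply: lerD; last exact: col_stoch_nonexpansive.
exact: le_trans (col_stoch_nonexpansive B_stoch _) (col_stoch_nonexpansive K0_stoch _).
Qed.

End ClosedLoop.

Section ErrorAccumulation.
Context {R : realType} {d : nat}.
Local Notation vec := 'cV[R]_d.
Local Notation mat := 'M[R]_d.
Variables (G : mat) (e f : nat -> vec) (c : nat -> R) (t n : nat) (rho beta : R).
Hypotheses (G_ne : nonexpansive G) (beta0 : 0 <= beta) (e1 : e 1%N = 0).
Hypothesis e_rec : forall s, (1 <= s < t)%N -> e s.+1 = c s *: (G *m e s + f s).
Hypothesis c01 : forall s, (1 <= s < t)%N -> 0 <= c s <= 1.
Hypothesis f_bound : forall s, (1 <= s < t)%N -> norm1 (f s) <= 2 * beta * (t - s)%:R.

Lemma error_unroll s j : (1 <= s)%N -> (s + j <= t)%N ->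
  exists P, 0 <= P <= 1 /\
    norm1 (e (s + j)%N - P *: (G ^+ j *m e s)) <= j%:R * (2 * beta * (t - s)%:R).
Proof.
move=> s1; elim: j => [|j ih] sjt.
  by exists 1; rewrite ler01 lexx addn0 expr0 mul1mx scale1r subrr norm10 mul0r.
have sj_t : (s + j < t)%N by rewrite -addnS.
have sj_lt : (1 <= s + j < t)%N by rewrite sj_t andbT (leq_trans s1 (leq_addr _ _)).
have [P [/andP [P0 P1] ih_bound]] := ih (ltnW sj_t).
have /andP [c0 c1] := c01 sj_lt.
exists (c (s + j)%N * P); split; first by rewrite mulr_ge0 // mulr_ile1.
rewrite addnS e_rec // exprS -mulmxA -scalerA -scalerBr scalemxAr addrAC -mulmxBr.
rewrite norm1Z ger0_norm // mulrSr mulrDl mul1r.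
apply: le_trans (ler_piMl (norm1_ge0 _) c1) _; apply: le_trans (norm1D _ _) _.
apply: lerD; first exact: le_trans (G_ne _) ih_bound.
apply: le_trans (f_bound sj_lt) _; rewrite ler_wpM2l ?mulr_ge0 // ler_nat.
by rewrite leq_sub2l // leq_addr.
Qed.

Hypotheses (n_gt0 : (0 < n)%N) (rho0 : 0 <= rho) (rho1 : rho < 1).
Hypothesis contract :
  forall s, (1 <= s <= t)%N -> norm1 (G ^+ n *m e s) <= rho * norm1 (e s).

Let Lam := n%:R / (1 - rho).

Let LamE : Lam * (1 - rho) = n%:R.
Proof. by rewrite mulfVK // gt_eqF // subr_gt0. Qed.

Let n_le_Lam : n%:R <= Lam.
Proof. by rewrite -LamE ler_piMr ?gerBl // divr_ge0 // subr_ge0 ltW. Qed.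

Lemma error_bound_early s : (1 <= s <= t)%N -> (s <= n)%N ->
  norm1 (e s) <= 2 * beta * Lam * (Lam + (t - s)%:R).
Proof.
move=> /andP [s1 st] sn; have s_t : (1 + (s - 1) <= t)%N by rewrite subnKC.
have [P [_]] := @error_unroll 1%N (s - 1)%N (leqnn 1) s_t.
rewrite subnKC // e1 mulmx0 scaler0 subr0 => /le_trans; apply.
have tE : (t - 1)%:R = (t - s)%:R + (s - 1)%:R :> R by rewrite -natrD addnBA // subnK.
have J_Lam : (s - 1)%:R <= Lam by apply: le_trans n_le_Lam; rewrite ler_nat leq_subLR leqW.
set J := (s - 1)%:R in J_Lam tE *; set D := (t - s)%:R in tE *.
rewrite tE (_ : J * (2 * beta * (D + J)) = 2 * beta * (J * (D + J))); last by ring.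
rewrite -[2 * beta * Lam * _]mulrA ler_wpM2l ?mulr_ge0 //.
by rewrite ler_pM ?addr_ge0 // addrC lerD2r.
Qed.

(* The bound is preserved by a block of [n] steps, as [Lam * (1 - rho) = n]. *)
Lemma error_bound s : (1 <= s <= t)%N -> norm1 (e s) <= 2 * beta * Lam * (Lam + (t - s)%:R).
Proof.
elim/ltn_ind: s => s ih s_range; case/andP: (s_range) => s1 st.
have [sn|ns] := leqP s n; first exact: error_bound_early.
have sn1 : (1 <= s - n)%N by rewrite subn_gt0.
have snK : (s - n + n = s)%N by rewrite subnK // ltnW.
have s_t : (s - n + n <= t)%N by rewrite snK.
have [P [/andP [P0 P1]]] := @error_unroll (s - n)%N n sn1 s_t.
rewrite snK => unrolled.
have sn_range : (1 <= s - n <= t)%N by rewrite sn1 (leq_trans (leq_subr _ _)).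
have sn_s : (s - n < s)%N by rewrite ltn_subrL n_gt0 (leq_trans sn1 (leq_subr _ _)).
have ih_sn := ih (s - n)%N sn_s sn_range.
have tE : (t - (s - n))%:R = (t - s)%:R + n%:R :> R.
  by rewrite -natrD subnBA 1?ltnW // addnBAC.
rewrite tE in unrolled ih_sn.
have contracted : norm1 (P *: (G ^+ n *m e (s - n)%N)) <= rho * norm1 (e (s - n)%N).
  by rewrite norm1Z ger0_norm // (le_trans (ler_piMl (norm1_ge0 _) P1)) ?contract.
have := norm1_distD (e s) (P *: (G ^+ n *m e (s - n)%N)) 0; rewrite !subr0.
move=> /le_trans; apply.
have -> : 2 * beta * Lam * (Lam + (t - s)%:R) = n%:R * (2 * beta * ((t - s)%:R + n%:R))
    + rho * (2 * beta * Lam * (Lam + ((t - s)%:R + n%:R))) by rewrite -LamE; ring.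
apply: lerD => //.
by apply: le_trans contracted _; rewrite ler_wpM2l.
Qed.

Lemma error_accumulation : (1 <= t)%N -> norm1 (e t) <= 2 * beta * Lam ^+ 2.
Proof.
by move=> t1; have := @error_bound t; rewrite t1 leqnn subnn addr0 -mulrA -expr2; apply.
Qed.

End ErrorAccumulation.

Section Controls.
Context {R : realType} {d : nat}.
Local Notation vec := 'cV[R]_d.
Local Notation mat := 'M[R]_d.
Variables (g : nat -> R) (x1 : vec) (W : nat -> vec).

Lemma gam0_id n : (0 < n)%N -> gam0 g n = g n.
Proof. by rewrite /gam0; case: n. Qed.

Hypothesis g01 : forall n, 0 <= gam0 g n <= 1.

Lemma lam_ge0 t i : 0 <= lam g t i.
Proof.
rewrite mulr_ge0 ?prodr_ge0 //; first by case/andP: (g01 (t - i)).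
by move=> j _; case/andP: (g01 (t - j)) => _; rewrite subr_ge0.
Qed.

Lemma lam0E H t : lam0 H g t = \prod_(1 <= j < H.+1) (1 - gam0 g (t - j)).
Proof.
rewrite /lam0; elim: H => [|H ih]; first by rewrite !big_geq // subr0.
rewrite big_nat_recr //= opprD addrA ih [RHS]big_nat_recr //= /lam.
by rewrite mulrBr mulr1 mulrC.
Qed.

Lemma lam0_ge0 H t : 0 <= lam0 H g t.
Proof.
rewrite lam0E prodr_ge0 // => j _.
by case/andP: (g01 (t - j)) => _; rewrite subr_ge0.
Qed.

Lemma uctrl_nonneg_mass H t (P : vec) (Mm : nat -> mat) a :
  (forall r, in_simplex (west0 x1 W r)) -> 0 <= a -> nonneg_mass P a ->
  (forall i, (1 <= i <= H)%N -> stoch_a a (Mm i)) ->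
  nonneg_mass (uctrl H g x1 W t P Mm) a.
Proof.
move=> W_simplex a_ge0 Pa Ma.
have -> : a = lam0 H g t * a + \sum_(1 <= i < H.+1) lam g t i * a.
  by rewrite -mulr_suml -mulrDl /lam0 subrK mul1r.
apply: nonneg_massD; first exact: nonneg_massZ (lam0_ge0 _ _) Pa.
rewrite big_nat [X in nonneg_mass _ X]big_nat; apply: nonneg_mass_sum => i /andP [i1 iH].
have iH' : (1 <= i <= H)%N by rewrite i1 -ltnS.
have [M0 [M0_stoch ->]] := Ma i iH'.
rewrite -scalemxAl; apply: nonneg_massZ (lam_ge0 _ _) _.
rewrite -[X in nonneg_mass _ X]mulr1.
exact: nonneg_massZ a_ge0 (col_stoch_nonneg_mass M0_stoch (W_simplex _)).
Qed.

Lemma uctrl_dist H s (P P' : vec) (Mm Mm' : nat -> mat) dl :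
  norm1 (P - P') <= dl ->
  (forall i, (1 <= i <= H)%N -> norm1 ((Mm i - Mm' i) *m west0 x1 W (s - i)) <= dl) ->
  norm1 (uctrl H g x1 W s P Mm - uctrl H g x1 W s P' Mm') <= dl.
Proof.
move=> dP dM; rewrite /uctrl opprD addrACA -scalerBr -sumrB.
under eq_bigr do rewrite -scalerBr -mulmxBl.
apply: le_trans (norm1D _ _) _.
rewrite -[leRHS]mul1r -[1 in leRHS](subrK (\sum_(1 <= i < H.+1) lam g s i)) -/(lam0 H g s).
rewrite mulrDl mulr_suml; apply: lerD.
  by rewrite norm1Z ger0_norm ?lam0_ge0 // ler_wpM2l ?lam0_ge0.
apply: le_trans (norm1_sum _ _ _) _; rewrite !big_nat; apply: ler_sum => i /andP [i1 iH].
by rewrite norm1Z ger0_norm ?lam_ge0 // ler_wpM2l ?lam_ge0 // dM // i1 -ltnS.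
Qed.

Lemma inX_uctrl_nonneg_mass amin aub H (P : vec) (Mm : nat -> mat) :
  (forall r, in_simplex (west0 x1 W r)) -> 0 <= amin -> inX amin aub H P Mm ->
  amin <= norm1 P <= aub /\ forall s, nonneg_mass (uctrl H g x1 W s P Mm) (norm1 P).
Proof.
move=> W_simplex amin0 [a [/andP [amin_a a_aub] [[P0 [P0_simplex ->]] Ma]]].
have a_ge0 := le_trans amin0 amin_a.
have Pa : nonneg_mass (a *: P0) a.
  by rewrite -[X in nonneg_mass _ X]mulr1; apply: nonneg_massZ.
rewrite (nonneg_mass_norm1 Pa) amin_a a_aub; split => // s.
exact: uctrl_nonneg_mass.
Qed.

End Controls.

Section Dynamics.
Context {R : realType} {d : nat}.
Local Notation vec := 'cV[R]_d.
Local Notation mat := 'M[R]_d.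
Variables (A B : mat).
Hypotheses (A_stoch : col_stoch A) (B_stoch : col_stoch B).

Lemma step_in_simplex g (x u w : vec) a :
  in_simplex x -> nonneg_mass u a -> 0 <= a <= 1 -> in_simplex w -> 0 <= g <= 1 ->
  in_simplex (step A B g x u w).
Proof.
move=> x_simplex ua /andP [a_ge0 a_le1] w_simplex /andP [g_ge0 g_le1].
have mass1 : (1 - g) * ((1 - a) * 1 + a) + g * 1 = 1 by ring.
change (nonneg_mass (step A B g x u w) 1).
rewrite -[X in nonneg_mass _ X]mass1 /step (nonneg_mass_norm1 ua).
apply: nonneg_massD (nonneg_massZ g_ge0 w_simplex).
apply: nonneg_massZ; first by rewrite subr_ge0.
apply: nonneg_massD (col_stoch_nonneg_mass B_stoch ua).
by apply: nonneg_massZ (col_stoch_nonneg_mass A_stoch x_simplex); rewrite subr_ge0.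
Qed.

Lemma step_sub g (x x' u u' w : vec) :
  step A B g x u w - step A B g x' u' w =
  (1 - g) *: (((1 - norm1 u) *: A) *m (x - x')
              + ((norm1 u' - norm1 u) *: (A *m x') + B *m (u - u'))).
Proof.
rewrite /step -scalemxAl !mulmxBr.
move: (A *m x) (A *m x') (B *m u) (B *m u') (norm1 u) (norm1 u') => Ax Ax' Bu Bu' nu nu'.
by apply/matrixP => i j; rewrite !mxE; ring.
Qed.

Lemma cfxS H g (x1 : vec) (W : nat -> vec) (P : vec) (Mm : nat -> mat) k : (0 < k)%N ->
  cfx A B H g x1 W P Mm k.+1 =
    step A B (g k) (cfx A B H g x1 W P Mm k) (uctrl H g x1 W k P Mm) (W k).
Proof. by case: k. Qed.

End Dynamics.

Section OpenLoopContraction.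
Context {R : realType} {d : nat}.
Local Notation vec := 'cV[R]_d.
Local Notation mat := 'M[R]_d.
Variables (A B : mat) (alb aub tau : R) (x1 : vec).
Hypotheses (A_stoch : col_stoch A) (B_stoch : col_stoch B).
Hypotheses (alb0 : 0 <= alb) (aub1 : aub <= 1) (x1_simplex : in_simplex x1).
Hypotheses (tau0 : 0 < tau) (Ksim : Ksim_nonempty A B alb aub tau).

(* Either [A] mixes within [4 tau] steps, or, by the definition of [a0], [aub] is below
   [1 / (96 tau)] and [A] is close to the closed loop of the policy in [Ksim]. *)
Lemma open_loop_zero_mass_contraction : a0 A alb aub tau < (96 * tau)^-1 ->
  exists k : nat, k%:R <= 8 * tau /\
    forall v : vec, mass v = 0 -> norm1 (A ^+ k *m v) <= norm1 v / 2.
Proof.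
move=> a0_small; have A_ne := col_stoch_nonexpansive A_stoch.
have [A_slow|A_fast] := boolP ((4 * tau)%:E < tmix A)%E; last first.
  rewrite -leNgt in A_fast.
  have [k [k8 contr]] : exists k : nat, k%:R <= 2 * (4 * tau) /\
      forall v : vec, mass v = 0 -> norm1 (A ^+ k *m v) <= norm1 v / 2.
    apply: (near_mixing_contraction A_ne A_ne _ A_fast (lexx 0)).
    - by rewrite mulr_ge0 // ltW.
    - by move=> z; rewrite subrr norm10 mul0r.
    - by rewrite mulr0.
  by exists k; split => //; lra.
move: a0_small; rewrite /a0 A_slow div1r gt_max gt_min ltxx orbF => /andP [_ aub_small].
case: Ksim => _ [[a' [/andP [alb_a' a'_aub] [K0 [K0_stoch ->]]]] K_mix].
have a'0 : 0 <= a' := le_trans alb0 alb_a'.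
have a'1 : a' <= 1 := le_trans a'_aub aub1.
have q0 : 0 < 96 * tau by rewrite mulr_gt0.
have a'_small : a' * (96 * tau) < 1.
  by rewrite -ltr_pdivlMr // div1r (le_lt_trans a'_aub).
have dl0 : 0 <= 2 * a' by rewrite mulr_ge0.
have perturbation_small : 2 * tau * (2 * a') <= 4^-1 by nra.
have [k [k2 contr]] := near_mixing_contraction
  (CK_nonexpansive A_stoch B_stoch K0_stoch a'0 a'1 x1_simplex) A_ne (ltW tau0) K_mix
  dl0 (CK_dist_A A_stoch B_stoch K0_stoch a'0 x1_simplex) perturbation_small.
by exists k; split => //; lra.
Qed.

Lemma scaled_open_loop_contraction a : a0 A alb aub tau <= a -> a <= aub ->
  (forall v : vec, mass v = 0 -> v = 0) \/
  exists n rho, [/\ (0 < n)%N, 0 <= rho, rho < 1, n%:R / (1 - rho) <= 96 * tau &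
    forall v : vec, mass v = 0 -> norm1 (((1 - a) *: A) ^+ n *m v) <= rho * norm1 v].
Proof.
move=> a0_a a_aub; have a1 := le_trans a_aub aub1.
have a_ge0 : 0 <= a by apply: le_trans a0_a; rewrite le_max alb0.
have q0 : 0 < 96 * tau by rewrite mulr_gt0.
have [a_large|a_small] := lerP (96 * tau)^-1 a.
  have a_pos : 0 < a by apply: lt_le_trans a_large; rewrite invr_gt0.
  right; exists 1%N, (1 - a); split => //; rewrite ?subr_ge0 ?gtrBl //.
    by rewrite subKr div1r -[96 * tau]invrK lef_pV2 ?posrE ?invr_gt0.
  move=> v _; rewrite expr1 -scalemxAl norm1Z ger0_norm ?subr_ge0 //.
  by rewrite ler_wpM2l ?subr_ge0 //; apply: col_stoch_nonexpansive.
have [k [k8 contr]] := open_loop_zero_mass_contraction (le_lt_trans a0_a a_small).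
have [k0|k_gt0] := posnP k.
  left => v v0; apply: norm1_eq0; have := contr v v0; rewrite k0 expr0 mul1mx.
  by have := norm1_ge0 v; lra.
right; exists k, 2^-1; split => //; try lra.
  by rewrite (_ : k%:R / (1 - 2^-1) = 2 * k%:R); [lra | field].
move=> v v0; rewrite exprZmx -scalemxAl norm1Z ger0_norm ?exprn_ge0 ?subr_ge0 //.
have := contr v v0; have := norm1_ge0 (A ^+ k *m v).
have : (1 - a) ^+ k <= 1 by rewrite exprn_ile1 ?subr_ge0 ?gerBl.
nra.
Qed.

End OpenLoopContraction.

Lemma expr2_le_expr3 {R : realDomainType} (x y : R) : 1 <= x -> x <= y -> x ^+ 2 <= y ^+ 3.
Proof.
move=> x1 xy; have y1 := le_trans x1 xy.
apply: (@le_trans _ _ (y ^+ 2)); first by rewrite !expr2 ler_pM // (le_trans ler01 x1).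
by rewrite [leRHS]exprS ler_peMl // exprn_ge0 // (le_trans ler01 y1).
Qed.

Section Execution.
Context {R : realType} {d : nat}.
Local Notation vec := 'cV[R]_d.
Local Notation mat := 'M[R]_d.
Variables (A B : mat) (alb aub tau beta : R) (x1 : vec) (gam : nat -> R) (w : nat -> vec).
Variables (H T : nat) (p : nat -> vec) (M : nat -> nat -> mat) (x u west : nat -> vec).
Hypotheses (A_stoch : col_stoch A) (B_stoch : col_stoch B).
Hypotheses (alb0 : 0 <= alb) (aub1 : aub <= 1) (x1_simplex : in_simplex x1).
Hypothesis gam01 : forall t, (1 <= t)%N -> 0 <= gam t <= 1.
Hypothesis w_simplex : forall t, (1 <= t)%N -> in_simplex (w t).
Hypotheses (tau0 : 0 < tau) (Ksim : Ksim_nonempty A B alb aub tau).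
Hypothesis iterates_inX :
  forall s, (1 <= s <= T.+1)%N -> inX (a0 A alb aub tau) aub H (p s) (M s).
Hypothesis x_1 : x 1%N = x1.
Hypothesis u_def :
  forall t, (1 <= t <= T)%N -> u t = uctrl H (gam0 gam) x1 west t (p t) (M t).
Hypothesis x_step :
  forall t, (1 <= t <= T)%N -> x t.+1 = step A B (gam t) (x t) (u t) (w t).
Hypothesis west_def : forall t, (1 <= t <= T)%N ->
  west t = if gam t == 0 then 0 else
    (gam t)^-1 *: (x t.+1 - (1 - gam t) *: ((1 - norm1 (u t)) *: (A *m x t) + B *m u t)).
Hypothesis stable : forall t, (1 <= t <= T)%N ->
  norm1 (p t - p t.+1) <= beta /\
  (forall i, (1 <= i <= H)%N -> opnorm11 (M t i - M t.+1 i) <= beta).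

Local Notation uctrl_w := (uctrl H (gam0 gam) x1 w).

Lemma gam_weights01 n : 0 <= gam0 (gam0 gam) n <= 1.
Proof.
have [->|n_gt0] := posnP n; first by rewrite /gam0 eqxx ler01 lexx.
by rewrite !gam0_id // gam01.
Qed.

Lemma west0_simplex r : in_simplex (west0 x1 w r).
Proof. by rewrite /west0; case: r => [|r] //=; apply: w_simplex. Qed.

Lemma west_exact r : (1 <= r <= T)%N -> gam r = 0 \/ west r = w r.
Proof.
move=> r_range; rewrite west_def //; have [->|g_neq0] := eqVneq (gam r) 0; first by left.
by right; rewrite x_step // /step addrAC subrr add0r scalerA mulVf // scale1r.
Qed.

Lemma step_west r (y v : vec) : (1 <= r <= T)%N ->
  step A B (gam r) y v (west r) = step A B (gam r) y v (w r).
Proof.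
by move=> r_range; case: (west_exact r_range) => [g0|->] //; rewrite /step g0 !scale0r.
Qed.

Lemma uctrl_west s (P : vec) (Mm : nat -> mat) : (s <= T)%N ->
  uctrl H (gam0 gam) x1 west s P Mm = uctrl_w s P Mm.
Proof.
move=> sT; congr (_ + _); apply: eq_bigr => i _; rewrite /west0.
case: eqP => // /eqP si_neq0.
have si_range : (1 <= s - i <= T)%N by rewrite lt0n si_neq0 (leq_trans (leq_subr _ _)).
case: (west_exact si_range) => [g0|->] //.
by rewrite /lam !gam0_id ?lt0n // g0 mul0r !scale0r.
Qed.

Lemma iterate_mass s : (1 <= s <= T.+1)%N ->
  a0 A alb aub tau <= norm1 (p s) <= aub /\
  forall s', nonneg_mass (uctrl_w s' (p s) (M s)) (norm1 (p s)).
Proof.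
move=> s_range; have amin0 : 0 <= a0 A alb aub tau by rewrite /a0 le_max alb0.
exact (inX_uctrl_nonneg_mass gam_weights01 west0_simplex amin0 (iterates_inX s_range)).
Qed.

Lemma iterate_mass01 s : (1 <= s <= T.+1)%N -> 0 <= norm1 (p s) <= 1.
Proof.
by move=> /iterate_mass [/andP [_ ?] _]; rewrite norm1_ge0 (le_trans _ aub1).
Qed.

Lemma state_in_simplex s : (1 <= s <= T.+1)%N -> in_simplex (x s).
Proof.
elim: s => [//|s ih]; case: s ih => [_ _|s ih /andP [_ sT]]; first by rewrite x_1.
have s_range : (1 <= s.+1 <= T)%N by rewrite -ltnS.
rewrite x_step // u_def // uctrl_west; last by case/andP: s_range.
have s_range' : (1 <= s.+1 <= T.+1)%N by rewrite (ltnW sT).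
apply: (step_in_simplex A_stoch B_stoch _ ((iterate_mass s_range').2 _)).
- exact: ih (ltnW sT).
- exact: iterate_mass01.
- exact: w_simplex.
- exact: gam01.
Qed.

Lemma control_drift s t : (1 <= s)%N -> (s <= t <= T)%N ->
  norm1 (uctrl_w s (p t) (M t) - uctrl_w s (p s) (M s)) <= (t - s)%:R * beta.
Proof.
move=> s1 /andP [st tT].
have stable_on r : (s <= r < t)%N -> (1 <= r <= T)%N.
  by move=> /andP [sr rt]; rewrite (leq_trans s1 sr) (leq_trans (ltnW rt)).
apply: (uctrl_dist gam_weights01) => [|i iH].
  have := @norm1_drift _ _ p s (t - s) beta; rewrite subnKC //; apply=> r r_range.
  exact: (stable (stable_on r r_range)).1.
have v1 := nonneg_mass_norm1 (west0_simplex (s - i)).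
have := @norm1_drift _ _ (fun r => M r i *m west0 x1 w (s - i)) s (t - s) beta.
rewrite subnKC // -mulmxBl; apply=> r r_range; rewrite -mulmxBl.
exact: le_trans (opnorm11_ub _ v1) ((stable (stable_on r r_range)).2 i iH).
Qed.

Variable t : nat.
Hypothesis t_range : (1 <= t <= T)%N.

Let a := norm1 (p t).
Let xt := cfx A B H (gam0 gam) x1 west (p t) (M t).
Let ut s := uctrl_w s (p t) (M t).
Let us s := uctrl_w s (p s) (M s).
Let G := (1 - a) *: A.
Let f s := (norm1 (us s) - a) *: (A *m x s) + B *m (ut s - us s).

Let t_range1 : (1 <= t <= T.+1)%N.
Proof. by case/andP: t_range => -> /leqW. Qed.

Let range_before s : (s < t)%N -> (s <= T)%N.
Proof. by move=> st; apply: leq_trans (ltnW st) _; case/andP: t_range. Qed.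

Lemma cf_state_step s : (1 <= s < t)%N -> xt s.+1 = step A B (gam s) (xt s) (ut s) (w s).
Proof.
case: s => [//|s] /andP [_ st]; have sT := range_before st.
by rewrite /xt cfxS // gam0_id // step_west // uctrl_west.
Qed.

Lemma cf_state_in_simplex s : (1 <= s <= t)%N -> in_simplex (xt s).
Proof.
elim: s => [//|s ih]; case: s ih => [_ _|s ih /andP [_ st]]; first exact: x1_simplex.
rewrite cf_state_step //.
apply: (step_in_simplex A_stoch B_stoch _ ((iterate_mass t_range1).2 _)).
- exact: ih (ltnW st).
- exact: iterate_mass01.
- exact: w_simplex.
- exact: gam01.
Qed.

Lemma cf_error_mass s : (1 <= s <= t)%N -> mass (xt s - x s) = 0.
Proof.
move=> s_range; have sT : (1 <= s <= T.+1)%N.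
  by case/andP: s_range => -> /leq_trans; apply; case/andP: t_range1.
rewrite massB (in_simplex_mass (cf_state_in_simplex s_range)).
by rewrite (in_simplex_mass (state_in_simplex sT)) subrr.
Qed.

Lemma cf_error_rec s : (1 <= s < t)%N ->
  xt s.+1 - x s.+1 = (1 - gam s) *: (G *m (xt s - x s) + f s).
Proof.
move=> /andP [s1 st]; have sT : (1 <= s <= T)%N by rewrite s1 range_before.
rewrite cf_state_step ?s1 // x_step // u_def // uctrl_west ?range_before // step_sub.
by rewrite (nonneg_mass_norm1 ((iterate_mass t_range1).2 s)).
Qed.

Lemma cf_forcing_bound s : (1 <= s < t)%N -> norm1 (f s) <= 2 * beta * (t - s)%:R.
Proof.
move=> /andP [s1 st]; have sT : (1 <= s <= T.+1)%N by rewrite s1 ltnW // ltnS range_before.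
have drift : norm1 (ut s - us s) <= (t - s)%:R * beta.
  by apply: control_drift; rewrite // ltnW //; case/andP: t_range.
have mass_gap : `|norm1 (us s) - a| <= norm1 (ut s - us s).
  by rewrite /a -(nonneg_mass_norm1 ((iterate_mass t_range1).2 s)) norm1_distC norm1_dist_dist.
have Ax1 : norm1 (A *m x s) <= 1.
  by rewrite -(nonneg_mass_norm1 (state_in_simplex sT)) col_stoch_nonexpansive.
have -> : 2 * beta * (t - s)%:R = (t - s)%:R * beta + (t - s)%:R * beta by ring.
apply: le_trans (norm1D _ _) _; rewrite norm1Z.
apply: lerD; last exact: le_trans (col_stoch_nonexpansive B_stoch _) drift.
apply: le_trans (ler_wpM2l (normr_ge0 _) Ax1) _.
by rewrite mulr1; apply: le_trans mass_gap drift.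
Qed.

Lemma counterfactual_state_error : norm1 (xt t - x t) <= 2 * beta * (96 * tau) ^+ 3.
Proof.
have beta0 : 0 <= beta := le_trans (norm1_ge0 _) (stable t_range).1.
have [/andP [amin_a a_aub] _] := iterate_mass t_range1.
have [vanish|[n [rho [n_gt0 rho0 rho1 Lam_small contract]]]] :=
  scaled_open_loop_contraction A_stoch B_stoch alb0 aub1 x1_simplex tau0 Ksim amin_a a_aub.
  have t_self : (1 <= t <= t)%N by rewrite leqnn andbT; case/andP: t_range.
  rewrite (vanish _ (cf_error_mass t_self)) norm10.
  by rewrite !mulr_ge0 // ltW.
have G_ne : nonexpansive G.
  have /andP [a_ge0 a_le1] := iterate_mass01 t_range1.
  move=> v; rewrite -scalemxAl norm1Z ger0_norm ?subr_ge0 //.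
  by apply: le_trans (col_stoch_nonexpansive A_stoch v); rewrite ler_piMl ?norm1_ge0 ?gerBl.
have e1 : xt 1%N - x 1%N = 0 by rewrite /xt /= x_1 subrr.
have c01 s : (1 <= s < t)%N -> 0 <= 1 - gam s <= 1.
  by move=> /andP [s1 _]; have /andP [g0 g1] := gam01 s1; rewrite subr_ge0 g1 gerBl.
have contract_e s : (1 <= s <= t)%N ->
    norm1 (G ^+ n *m (xt s - x s)) <= rho * norm1 (xt s - x s).
  by move=> /cf_error_mass /contract.
have := error_accumulation G_ne beta0 e1 cf_error_rec c01 cf_forcing_bound n_gt0 rho0 rho1
  contract_e (proj1 (andP t_range)).
move=> /le_trans; apply; rewrite ler_wpM2l ?mulr_ge0 //.
set Lam := n%:R / (1 - rho) in Lam_small *.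
have Lam1 : 1 <= Lam.
  rewrite ler_pdivlMr ?subr_gt0 // mul1r; apply: le_trans (_ : 1 <= n%:R).
    by rewrite gerBl.
  by rewrite ler1n.
exact: expr2_le_expr3.
Qed.

End Execution.

Lemma ln_inv_ge1 {R : realType} (beta : R) : 0 < beta -> beta <= expR (-1) -> 1 <= ln beta^-1.
Proof.
move=> beta0 beta_small; rewrite -[X in X <= _](expRK 1) ler_ln ?posrE ?expR_gt0 ?invr_gt0 //.
by rewrite -[expR 1]invrK -expRN lef_pV2 ?posrE ?expR_gt0.
Qed.

Theorem lemma7 (R : realType) :
  exists (C c0 beta0 : R), 0 < c0 /\ 0 < beta0 /\
  forall (c : R), 0 < c -> c <= c0 ->
  forall (d H T : nat) (A B : 'M[R]_d) (alb aub : R) (x1 : 'cV[R]_d)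
    (gam : nat -> R) (w : nat -> 'cV[R]_d) (cost : nat -> 'cV[R]_d -> 'cV[R]_d -> R)
    (L tau beta : R)
    (p : nat -> 'cV[R]_d) (M : nat -> nat -> 'M[R]_d)
    (gp : nat -> 'cV[R]_d) (gM : nat -> nat -> 'M[R]_d)
    (x u west : nat -> 'cV[R]_d),
  simplex_lds A B alb aub x1 gam w ->
  costs_convex cost -> costs_lipschitz L cost ->
  0 < tau -> 0 < beta -> beta <= beta0 -> (1 <= T)%N ->
  Ksim_nonempty A B alb aub tau ->
  (* initialization: (p_1, M_1) = argmin_X R *)
  inX (a0 A alb aub tau) aub H (p 1%N) (M 1%N) ->
  (forall (p' : 'cV[R]_d) (M' : nat -> 'M[R]_d), inX (a0 A alb aub tau) aub H p' M' ->
     Reg H (p 1%N) (M 1%N) <= Reg H p' M') ->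
  (* actual execution *)
  x 1%N = x1 ->
  (forall t, (1 <= t <= T)%N -> u t = uctrl H (gam0 gam) x1 west t (p t) (M t)) ->
  (forall t, (1 <= t <= T)%N -> x t.+1 = step A B (gam t) (x t) (u t) (w t)) ->
  (forall t, (1 <= t <= T)%N ->
     west t = if gam t == 0 then 0 else
       (gam t)^-1 *: (x t.+1 - (1 - gam t) *:
          ((1 - norm1 (u t)) *: (A *m x t) + B *m u t))) ->
  (* FTRL updates, with (gp s, gM s) the gradient of ell_s at (p_s, M_s) *)
  (forall t, (1 <= t <= T)%N ->
     inX (a0 A alb aub tau) aub H (p t.+1) (M t.+1) /\
     (forall (p' : 'cV[R]_d) (M' : nat -> 'M[R]_d), inX (a0 A alb aub tau) aub H p' M' ->
        ftrl_obj H (stepsize c L tau d H T) gp gM t (p t.+1) (M t.+1)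
          <= ftrl_obj H (stepsize c L tau d H T) gp gM t p' M')) ->
  (* stability of the iterates *)
  (forall t, (1 <= t <= T)%N ->
     norm1 (p t - p t.+1) <= beta /\
     (forall i, (1 <= i <= H)%N -> opnorm11 (M t i - M t.+1 i) <= beta)) ->
  forall t, (1 <= t <= T)%N ->
    `| ell A B H (gam0 gam) x1 west cost t (p t) (M t) - cost t (x t) (u t) |
      <= C * L * tau ^+ 3 * beta * (ln beta^-1) ^+ 3.
Proof.
exists (2 * 96 ^+ 3), 1, (expR (-1)); split; first exact: ltr01.
split; first exact: expR_gt0.
move=> c _ _ d H T A B alb aub x1 gam w cost L tau beta p M gp gM x u west
  [A_stoch [B_stoch [alb0 [_ [aub1 [x1_simplex [gam01 w_simplex]]]]]]] _ lip tau0 beta0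
  beta_small _ Ksim init_inX _ x_1 u_def x_step west_def ftrl stable t t_range.
have iterates_inX s : (1 <= s <= T.+1)%N -> inX (a0 A alb aub tau) aub H (p s) (M s).
  by case: s => [|[|s]] // /andP [_ sT]; apply: (ftrl s.+1 _).1.
have err := counterfactual_state_error A_stoch B_stoch alb0 aub1 x1_simplex gam01 w_simplex
  tau0 Ksim iterates_inX x_1 u_def x_step west_def stable t_range.
have L0 : 0 <= L.
  have := lip 0%N x1 x1 0 x1; rewrite subrr norm10 add0r sub0r norm1N.
  by rewrite (nonneg_mass_norm1 x1_simplex) mulr1; apply: le_trans.
rewrite /ell -u_def //; apply: le_trans (lip _ _ _ _ _) _; rewrite subrr norm10 addr0.
apply: le_trans (ler_wpM2l L0 err) _.
have -> : 2 * 96 ^+ 3 * L * tau ^+ 3 * beta * ln beta^-1 ^+ 3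
    = L * (2 * beta * (96 * tau) ^+ 3) * ln beta^-1 ^+ 3 by ring.
rewrite ler_peMr ?exprn_ege1 ?ln_inv_ge1 //.
by rewrite !mulr_ge0 // ltW.
Qed.
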